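(* For every integer $n\ge 2$, the clique number of $D_n$ is $$Cl(D_n)=\tau(n)+\pi(n)-\omega(n)+\gamma_1(n).$$ In particular, if $n$ is prime, $Cl(D_n)=\pi(n)+1$.
   Context: $D_n$ is the graph with vertex set $\{1,\dots,n\}$ in which distinct $a,b$ are adjacent iff $\gcd(a,b)\mid n$ (the maximal Diophantine graph of order $n$). $Cl(G)$ is the maximum order of a complete subgraph of $G$. $\pi(x)$ is the number of primes $\le x$, $\omega(n)$ the number of distinct primes dividing $n$, $\tau(n)$ the number of positive divisors of $n$. For a prime $p$, $\acute v_p(n):=v_p(n)+1$ where $v_p$ is the $p$-adic valuation, and for real $0<x<n$, $\gamma_x(n):=\left|\{p^{\acute v_p(n)} : p \text{ prime},\ p\mid n,\ x<p^{\acute v_p(n)}<n\}\right|$. *)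

From mathcomp Require Import all_boot.
Set Implicit Arguments. Unset Strict Implicit. Unset Printing Implicit Defensive.

Definition Dadj (n a b : nat) : bool := gcdn a b %| n.

(* A clique of D_n: a set of vertices, represented inside 'I_n.+1 = {0..n},
   all of which lie in {1..n}, pairwise adjacent. *)
Definition DClique (n : nat) (S : {set 'I_n.+1}) : bool :=
  [forall a in S, (0 < val a) &&
     [forall b in S, (a != b) ==> Dadj n (val a) (val b)]].

Definition Cl (n : nat) : nat :=
  \max_(S : {set 'I_n.+1} | DClique S) #|S|.

Definition prime_pi (x : nat) : nat := count prime (iota 0 x.+1).

Definition omega (n : nat) : nat := size (primes n).

Definition tau (n : nat) : nat := size (divisors n).

Definition vacute (p n : nat) : nat := (logn p n).+1.

Definition gamma (x n : nat) : nat :=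
  size (undup [seq p ^ vacute p n |
                 p <- primes n & (x < p ^ vacute p n) && (p ^ vacute p n < n)]).

From mathcomp Require Import all_boot zify.
Set Implicit Arguments. Unset Strict Implicit. Unset Printing Implicit Defensive.

(* A vertex a of D_n that does not divide n is divisible by p ^ vacute p n for
   some prime p, and two vertices sharing such a power are not adjacent since
   it divides their gcd but not n.  So a clique contains, besides divisors of
   n, at most one vertex per prime p with p ^ vacute p n <= n; conversely the
   divisors of n together with these prime powers form a clique, since powers
   of distinct primes are coprime.  Counting the primes p <= n, those not
   dividing n contribute p ^ vacute p n = p <= n, and those dividing n
   contribute exactly when p ^ vacute p n < n. *)

Lemma count_predI_predC (T : Type) (a b : pred T) (s : seq T) :
  count a s = count (predI a b) s + count (predI a (predC b)) s.
Proof. by elim: s => //= x s ->; case: (a x); case: (b x) => /=; lia. Qed.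

Lemma uniq_size_count (T : eqType) (P : pred T) (s t : seq T) :
  uniq s -> uniq t -> s =i [pred x | P x && (x \in t)] -> size s = count P t.
Proof.
move=> s_uniq t_uniq eq_s; rewrite -size_filter; apply: perm_size.
by apply: uniq_perm; rewrite ?filter_uniq // => x; rewrite mem_filter eq_s.
Qed.

Lemma card_ord_count (m : nat) (P : pred nat) :
  #|[set i : 'I_m | P i]| = count P (iota 0 m).
Proof.
rewrite cardE (@uniq_size_count _ (fun i : 'I_m => P i) _ (enum 'I_m)) ?enum_uniq //.
  by rewrite -val_enum_ord count_map.
by move=> i; rewrite mem_enum inE unfold_in /= mem_enum andbT.
Qed.

Definition vpow (p n : nat) : nat := p ^ vacute p n.

Section VacutePower.

Variables (n p : nat).
Hypothesis p_prime : prime p.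

Lemma vpow_gt0 : 0 < vpow p n.
Proof. by rewrite expn_gt0 prime_gt0. Qed.

Lemma leq_prime_vpow : p <= vpow p n.
Proof. by rewrite /vpow -{1}(expn1 p) (leq_pexp2l (prime_gt0 p_prime)). Qed.

Lemma vpow_ndvd : 0 < n -> ~~ (vpow p n %| n).
Proof. by move=> n_gt0; rewrite pfactor_dvdn // ltnn. Qed.

Lemma vpow_neq : 0 < n -> vpow p n != n.
Proof. by move=> n_gt0; apply: contraNneq (vpow_ndvd n_gt0) => ->. Qed.

Lemma vpow_ndvd_id : ~~ (p %| n) -> vpow p n = p.
Proof.
move=> p_ndvd; suff logn0 : logn p n = 0 by rewrite /vpow /vacute logn0 expn1.
by apply/eqP; rewrite -leqn0 leqNgt logn_gt0 mem_primes (negbTE p_ndvd) !andbF.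
Qed.

Lemma vpow_inj (r : nat) : prime r -> vpow p n = vpow r n -> p = r.
Proof.
move=> r_prime eq_pr.
have : p %| vpow r n by rewrite -eq_pr Euclid_dvdX // dvdnn.
by rewrite Euclid_dvdX // dvdn_prime2 // andbT => /eqP.
Qed.

Lemma coprime_vpow (r : nat) : prime r -> p != r -> coprime (vpow p n) (vpow r n).
Proof. by move=> r_prime ne_pr; rewrite coprimeXl // coprimeXr // prime_coprime // dvdn_prime2. Qed.

Lemma vpow_dvd_gcd_ndvd (a b : nat) :
  0 < n -> vpow p n %| a -> vpow p n %| b -> ~~ (gcdn a b %| n).
Proof.
move=> n_gt0 pa pb; apply: contra (vpow_ndvd n_gt0); apply: dvdn_trans.
by rewrite dvdn_gcd pa pb.
Qed.

End VacutePower.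

Lemma vpow_dvd_of_ndvd {n a : nat} :
  0 < n -> 0 < a -> ~~ (a %| n) -> exists2 p, prime p & vpow p n %| a.
Proof.
move=> n_gt0 a_gt0 a_ndvd.
have [/hasP [p pa p_part_ndvd] | /hasPn all_dvd] :=
  boolP (has (fun p : nat => ~~ (a`_p %| n)) (primes a)).
  have p_prime : prime p by move: pa; rewrite mem_primes => /andP[].
  exists p => //; move: p_part_ndvd.
  by rewrite p_part !pfactor_dvdn // -ltnNge.
case/negP: a_ndvd; apply/dvdn_partP => // p pa.
exact/negPn/all_dvd.
Qed.

Section CliqueNumber.

Variable n : nat.
Hypothesis n_gt0 : 0 < n.

Definition divisor_vertices : {set 'I_n.+1} := [set d : 'I_n.+1 | (0 < d) && (d %| n)].
Definition vpow_primes : {set 'I_n.+1} := [set p : 'I_n.+1 | prime p && (vpow p n <= n)].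

Lemma DCliqueP (S : {set 'I_n.+1}) :
  reflect (forall a, a \in S -> 0 < a /\ forall b, b \in S -> a != b -> gcdn a b %| n)
          (DClique S).
Proof.
apply: (iffP forall_inP) => [cliqueS a aS | cliqueS a aS].
  have /andP[a_gt0 /forall_inP adj] := cliqueS a aS.
  by split=> // b bS; apply/implyP/adj.
have [a_gt0 adj] := cliqueS a aS; rewrite a_gt0.
by apply/forall_inP => b bS; apply/implyP/adj.
Qed.

Lemma card_DClique_le (S : {set 'I_n.+1}) :
  DClique S -> #|S| <= #|divisor_vertices| + #|vpow_primes|.
Proof.
move=> /DCliqueP cliqueS.
pose f (a : 'I_n.+1) : 'I_n.+1 :=
  if [pick p : 'I_n.+1 | prime p && (vpow p n %| a)] is Some p then p else ord0.
have fP a : a \in S :\: divisor_vertices -> prime (f a) && (vpow (f a) n %| a).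
  rewrite !inE => /andP[a_ndvd aS]; have [a_gt0 _] := cliqueS a aS.
  rewrite a_gt0 /= in a_ndvd.
  have [p p_prime pa] := vpow_dvd_of_ndvd n_gt0 a_gt0 a_ndvd.
  rewrite /f; case: pickP => [// | no_pick].
  have p_lt : p < n.+1.
    apply: leq_ltn_trans (leq_prime_vpow n p_prime) _.
    exact: leq_ltn_trans (dvdn_leq a_gt0 pa) (ltn_ord a).
  by have := no_pick (Ordinal p_lt); rewrite /= p_prime pa.
rewrite -(cardsID divisor_vertices S).
apply: leq_add; first exact: subset_leq_card (subsetIr _ _).
rewrite -(@card_in_imset _ _ f).
  apply/subset_leq_card/subsetP => _ /imsetP [a aSD ->].
  have /andP[fa_prime fa_dvd] := fP a aSD.
  have [a_gt0 _] := cliqueS a (subsetP (subsetDl _ _) a aSD).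
  by rewrite inE fa_prime (leq_trans (dvdn_leq a_gt0 fa_dvd)) // -ltnS.
move=> a b aSD bSD fab; apply/eqP; apply: contraT => ne_ab.
have /andP[fa_prime fa_dvd] := fP a aSD; have /andP[_ fb_dvd] := fP b bSD.
rewrite -fab in fb_dvd.
move: aSD bSD; rewrite !inE => /andP[_ aS] /andP[_ bS].
have [_ adj] := cliqueS a aS.
by have := vpow_dvd_gcd_ndvd fa_prime n_gt0 fa_dvd fb_dvd; rewrite adj.
Qed.

Lemma exists_DClique_card :
  exists2 S : {set 'I_n.+1}, DClique S & #|S| = #|divisor_vertices| + #|vpow_primes|.
Proof.
pose q (p : 'I_n.+1) : 'I_n.+1 := inord (vpow p n).
have qP p : p \in vpow_primes -> prime p /\ val (q p) = vpow p n.
  by rewrite inE => /andP[p_prime le_n]; split=> //; exact: inordK.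
pose S := divisor_vertices :|: [set q p | p in vpow_primes].
have memS x : x \in S ->
    (0 < x /\ x %| n) \/ exists2 p : 'I_n.+1, prime p & val x = vpow p n.
  case/setUP => [|/imsetP [p pP ->]]; first by rewrite inE => /andP[]; left.
  by have [p_prime qp] := qP p pP; right; exists p.
exists S.
  apply/DCliqueP => a aS; have a_mem := memS a aS; split.
    by case: a_mem => [[] | [p p_prime ->]] //; apply: vpow_gt0.
  move=> b bS ne_ab; have b_mem := memS b bS.
  case: a_mem => [[_ a_dvd] | [p p_prime ap]]; first exact: dvdn_trans (dvdn_gcdl _ _) a_dvd.
  case: b_mem => [[_ b_dvd] | [r r_prime br]]; first exact: dvdn_trans (dvdn_gcdr _ _) b_dvd.
  have ne_pr : val p != val r.
    by apply: contraNneq ne_ab => eq_pr; apply/eqP/val_inj; rewrite ap br eq_pr.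
  by have /eqP := coprime_vpow n p_prime r_prime ne_pr; rewrite -ap -br => ->.
rewrite cardsU card_in_imset; last first.
  move=> p r pP rP eq_q; apply: val_inj.
  have [p_prime qp] := qP p pP; have [r_prime qr] := qP r rP.
  by apply: (vpow_inj (n := n) p_prime r_prime); rewrite -qp -qr eq_q.
suff -> : divisor_vertices :&: [set q p | p in vpow_primes] = set0 by rewrite cards0 subn0.
apply/setP => x; rewrite !inE; apply/negP => /andP[/andP[_ x_dvd] /imsetP [p pP eq_x]].
have [p_prime qp] := qP p pP.
by move: x_dvd; rewrite eq_x qp (negbTE (vpow_ndvd p_prime n_gt0)).
Qed.

Lemma Cl_card : Cl n = #|divisor_vertices| + #|vpow_primes|.
Proof.
apply/eqP; rewrite eqn_leq; apply/andP; split.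
  by apply/bigmax_leqP => S; apply: card_DClique_le.
by have [S cliqueS <-] := exists_DClique_card; apply: leq_bigmax_cond.
Qed.

Lemma card_divisor_vertices : #|divisor_vertices| = tau n.
Proof.
rewrite (card_ord_count _ (fun d => (0 < d) && (d %| n))).
apply: esym; apply: uniq_size_count; rewrite ?divisors_uniq ?iota_uniq // => d.
rewrite -dvdn_divisors // inE mem_iota.
case: (boolP (d %| n)) => [d_dvd | _]; rewrite ?andbF //=.
by rewrite ltnS (dvdn_gt0 n_gt0 d_dvd) (dvdn_leq n_gt0 d_dvd).
Qed.

Lemma omega_count : omega n = count (predI prime (dvdn^~ n)) (iota 0 n.+1).
Proof.
apply: uniq_size_count; rewrite ?primes_uniq ?iota_uniq // => p.
rewrite mem_primes n_gt0 inE mem_iota /= add0n ltnS.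
by case: (boolP (p %| n)) => [p_dvd | _]; rewrite ?andbF //= (dvdn_leq n_gt0 p_dvd) !andbT.
Qed.

Lemma omega_le_prime_pi : omega n <= prime_pi n.
Proof. by rewrite /prime_pi (count_predI_predC prime (dvdn^~ n)) omega_count leq_addr. Qed.

Lemma gamma1_count :
  gamma 1 n = count (fun p => prime p && (p %| n) && (vpow p n < n)) (iota 0 n.+1).
Proof.
rewrite /gamma undup_id; last first.
  rewrite map_inj_in_uniq ?filter_uniq ?primes_uniq // => p r.
  rewrite !mem_filter !mem_primes => /and3P[_ p_prime _] /and3P[_ r_prime _].
  exact: vpow_inj.
rewrite size_map; apply: uniq_size_count; rewrite ?filter_uniq ?primes_uniq ?iota_uniq // => p.
rewrite inE mem_filter mem_primes n_gt0 mem_iota -/(vpow p n).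
case: (boolP (prime p)) => [p_prime | _]; last by rewrite andbF.
case: (boolP (p %| n)) => [p_dvd | _]; last by rewrite !andbF.
have vpow_gt1 := leq_trans (prime_gt1 p_prime) (leq_prime_vpow n p_prime).
by rewrite vpow_gt1 add0n ltnS (dvdn_leq n_gt0 p_dvd).
Qed.

Lemma card_vpow_primes : #|vpow_primes| = prime_pi n - omega n + gamma 1 n.
Proof.
rewrite (card_ord_count _ (fun p => prime p && (vpow p n <= n))).
rewrite (count_predI_predC _ (dvdn^~ n)) /prime_pi (count_predI_predC prime (dvdn^~ n)).
rewrite omega_count gamma1_count.
have -> : count (predI (fun p => prime p && (vpow p n <= n)) (predC (dvdn^~ n))) (iota 0 n.+1)
        = count (predI prime (predC (dvdn^~ n))) (iota 0 n.+1).
  apply: eq_in_count => p; rewrite mem_iota add0n ltnS => /andP[_ le_pn] /=.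
  by case: (boolP (p %| n)) => p_dvd /=; rewrite ?andbF ?andbT // (vpow_ndvd_id p_dvd) le_pn andbT.
have -> : count (predI (fun p => prime p && (vpow p n <= n)) (dvdn^~ n)) (iota 0 n.+1)
        = count (fun p => prime p && (p %| n) && (vpow p n < n)) (iota 0 n.+1).
  apply: eq_count => p /=; case: (boolP (prime p)) => //= p_prime.
  by case: (p %| n); rewrite ?andbF // andbT leq_eqVlt (negbTE (vpow_neq p_prime n_gt0)).
lia.
Qed.

End CliqueNumber.

Lemma tau_prime (p : nat) : prime p -> tau p = 2.
Proof.
move=> p_prime; rewrite /tau (@perm_size _ _ [:: 1; p]) //.
apply: uniq_perm; rewrite ?divisors_uniq //= ?inE ?andbT.
  by rewrite neq_ltn prime_gt1.
move=> d; rewrite -dvdn_divisors ?prime_gt0 // !inE.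
apply/idP/orP; first by case/primeP: p_prime => _ /[apply] /orP.
by case=> /eqP ->; rewrite ?dvd1n ?dvdnn.
Qed.

Lemma omega_prime (p : nat) : prime p -> omega p = 1.
Proof. by move=> p_prime; rewrite /omega primes_prime. Qed.

Lemma gamma1_prime (p : nat) : prime p -> gamma 1 p = 0.
Proof.
move=> p_prime; rewrite /gamma primes_prime //= /vacute logn_prime // eqxx /=.
by rewrite [p ^ 2 < p]ltnNge expnS expn1 leq_pmulr ?prime_gt0 // andbF.
Qed.

Theorem mainTheorem8 (n : nat) (hn : 2 <= n) :
  Cl n = tau n + prime_pi n - omega n + gamma 1 n /\
  (prime n -> Cl n = prime_pi n + 1).
Proof.
have n_gt0 : 0 < n by apply: ltnW.
have Cl_formula : Cl n = tau n + prime_pi n - omega n + gamma 1 n.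
  rewrite Cl_card // card_vpow_primes // card_divisor_vertices //.
  by have := omega_le_prime_pi n_gt0; lia.
split=> // n_prime.
rewrite Cl_formula tau_prime // omega_prime // gamma1_prime //; lia.
Qed.
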